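(* Let $a,b,e\in\mathbb{R}$ with $b\ne0$, and let $\alpha_i(t)$ ($i=1,\dots,4$) be scalar continuous functions (not necessarily odd). (i) Suppose $b\alpha_1(t)+\alpha_3(t)$ is $2\pi/|b|$-periodic, $a(a+e)<0$, and $\int_0^{2\pi/b}(b\alpha_1(s)+\alpha_3(s))\,ds=0$. Then the solution $$x(t)=\sqrt{-a(a+e)}\sin\Big(bt+\int_0^t(b\alpha_1(s)+\alpha_3(s))ds\Big),\ y(t)=\sqrt{-a(a+e)}\cos\Big(bt+\int_0^t(b\alpha_1(s)+\alpha_3(s))ds\Big),\ z(t)=-a$$ of the system $$\begin{aligned}\dot x&=(ax+by+xz)(1+\alpha_1(t))+x(a+z)\alpha_2(t)+y\alpha_3(t),\\ \dot y&=(-bx+ay+yz)(1+\alpha_1(t))+y(a+z)\alpha_2(t)-x\alpha_3(t),\\ \dot z&=(ez-x^2-y^2-z^2)(1+\alpha_1(t)+\alpha_2(t))\end{aligned}$$ is $2\pi/|b|$-periodic (the period not necessarily minimal). (ii) Suppose $b\alpha_1(t)+\alpha_3(t)+a^4\alpha_4(t)$ is $2\pi/|b|$-periodic and $\int_0^{2\pi/b}(b\alpha_1(s)+\alpha_3(s)+a^4\alpha_4(s))\,ds=0$. Then the solution $$x(t)=a\sin\Big(bt+\int_0^t(b\alpha_1(s)+\alpha_3(s)+a^4\alpha_4(s))ds\Big),\ y(t)=a\cos\Big(bt+\int_0^t(b\alpha_1(s)+\alpha_3(s)+a^4\alpha_4(s))ds\Big),\ z(t)=-a$$ of the system $$\begin{aligned}\dot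 x&=(ax+by+xz)(1+\alpha_1(t))+x(a+z)\alpha_2(t)+y\alpha_3(t)-y(x^2+y^2)(4az+x^2+y^2+2z^2)\alpha_4(t),\\ \dot y&=(-bx+ay+yz)(1+\alpha_1(t))+y(a+z)\alpha_2(t)-x\alpha_3(t)+x(x^2+y^2)(4az+x^2+y^2+2z^2)\alpha_4(t),\\ \dot z&=-(2az+x^2+y^2+z^2)(1+\alpha_1(t)+\alpha_2(t))\end{aligned}$$ is $2\pi/|b|$-periodic (the period not necessarily minimal). *)

From Stdlib Require Import Reals.
From Coquelicot Require Import Coquelicot.
Open Scope R_scope.

Definition periodic (f : R -> R) (T : R) : Prop := forall t, f (t + T) = f t.

Definition F1x (a b : R) (al1 al2 al3 : R -> R) (t x y z : R) : R :=
  (a*x + b*y + x*z) * (1 + al1 t) + x*(a + z) * al2 t + y * al3 t.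
Definition F1y (a b : R) (al1 al2 al3 : R -> R) (t x y z : R) : R :=
  (-b*x + a*y + y*z) * (1 + al1 t) + y*(a + z) * al2 t - x * al3 t.
Definition F1z (e : R) (al1 al2 : R -> R) (t x y z : R) : R :=
  (e*z - x^2 - y^2 - z^2) * (1 + al1 t + al2 t).

Definition F2x (a b : R) (al1 al2 al3 al4 : R -> R) (t x y z : R) : R :=
  (a*x + b*y + x*z) * (1 + al1 t) + x*(a + z) * al2 t + y * al3 t
  - y * (x^2 + y^2) * (4*a*z + x^2 + y^2 + 2*z^2) * al4 t.
Definition F2y (a b : R) (al1 al2 al3 al4 : R -> R) (t x y z : R) : R :=
  (-b*x + a*y + y*z) * (1 + al1 t) + y*(a + z) * al2 t - x * al3 t
  + x * (x^2 + y^2) * (4*a*z + x^2 + y^2 + 2*z^2) * al4 t.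
Definition F2z (a : R) (al1 al2 : R -> R) (t x y z : R) : R :=
  - (2*a*z + x^2 + y^2 + z^2) * (1 + al1 t + al2 t).

Definition g1 (b : R) (al1 al3 : R -> R) (s : R) : R := b * al1 s + al3 s.
Definition g2 (a b : R) (al1 al3 al4 : R -> R) (s : R) : R :=
  b * al1 s + al3 s + a^4 * al4 s.
Definition phase (b : R) (g : R -> R) (t : R) : R := b * t + RInt g 0 t.

Definition sol1x a b e al1 al3 (t : R) : R :=
  sqrt (- (a*(a+e))) * sin (phase b (g1 b al1 al3) t).
Definition sol1y a b e al1 al3 (t : R) : R :=
  sqrt (- (a*(a+e))) * cos (phase b (g1 b al1 al3) t).
Definition sol2x a b al1 al3 al4 (t : R) : R :=
  a * sin (phase b (g2 a b al1 al3 al4) t).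
Definition sol2y a b al1 al3 al4 (t : R) : R :=
  a * cos (phase b (g2 a b al1 al3 al4) t).
Definition solz (a : R) (t : R) : R := - a.

(** On the plane [z = -a] both systems reduce to a rotation of the (x, y)-plane
    with angular velocity [b + g t], and the [z]-equation vanishes exactly on
    the circle [x^2 + y^2 = r^2] of the statement.  Hence
    [(r sin θ, r cos θ, -a)] with [θ t = b t + ∫_0^t g] is a solution.  When [g]
    has period [T = 2π/|b|] and zero mean over a period, [θ (t + T) = θ t ± 2π],
    so the solution is [T]-periodic. *)

From Stdlib Require Import Reals Lra.
From Coquelicot Require Import Coquelicot.
Open Scope R_scope.
Set Bullet Behavior "Strict Subproofs".

Lemma sum_sqr_polar (r th : R) : (r * sin th) ^ 2 + (r * cos th) ^ 2 = r ^ 2.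
Proof. rewrite <- (Rmult_1_r (r ^ 2)), <- (sin2_cos2 th); unfold Rsqr; ring. Qed.

Lemma Rmult_2PI_div_Rabs (b : R) :
  b <> 0 -> b * (2 * PI / Rabs b) = 2 * PI \/ b * (2 * PI / Rabs b) = - (2 * PI).
Proof.
  intros hb; destruct (Rcase_abs b) as [bneg | bpos].
  - right; rewrite Rabs_left by exact bneg; field; exact hb.
  - left; rewrite Rabs_right by exact bpos; field; exact hb.
Qed.

Lemma sin_plus_2PI_pm (x k : R) : k = 2 * PI \/ k = - (2 * PI) -> sin (x + k) = sin x.
Proof.
  intros [-> | ->]; rewrite sin_plus, ?sin_neg, ?cos_neg, sin_2PI, cos_2PI; ring.
Qed.

Lemma cos_plus_2PI_pm (x k : R) : k = 2 * PI \/ k = - (2 * PI) -> cos (x + k) = cos x.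
Proof.
  intros [-> | ->]; rewrite cos_plus, ?sin_neg, ?cos_neg, sin_2PI, cos_2PI; ring.
Qed.

Section Phase.

Variables (b : R) (g : R -> R).
Hypothesis g_cont : forall t, continuous g t.

Lemma ex_RInt_cont (u v : R) : ex_RInt g u v.
Proof. apply (@ex_RInt_continuous R_CompleteNormedModule); intros; apply g_cont. Qed.

Lemma is_derive_scal_sin_phase (r t : R) :
  is_derive (fun t => r * sin (phase b g t)) t (r * cos (phase b g t) * (b + g t)).
Proof.
  unfold phase; auto_derive.
  - repeat split; [apply ex_RInt_cont |].
    apply filter_forall; intros s; apply continuity_pt_filterlim, g_cont.
  - change (RInt (fun x => g x) 0 t) with (RInt g 0 t); ring.
Qed.

Lemma is_derive_scal_cos_phase (r t : R) :
  is_derive (fun t => r * cos (phase b g t)) t (- (r * sin (phase b g t)) * (b + g t)).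
Proof.
  unfold phase; auto_derive.
  - repeat split; [apply ex_RInt_cont |].
    apply filter_forall; intros s; apply continuity_pt_filterlim, g_cont.
  - change (RInt (fun x => g x) 0 t) with (RInt g 0 t); ring.
Qed.

Lemma RInt_plus_period (T t : R) :
  periodic g T -> RInt g 0 (t + T) = RInt g 0 t + RInt g 0 T.
Proof.
  intros g_per.
  rewrite <- (RInt_Chasles g 0 T (t + T)) by apply ex_RInt_cont.
  assert (shift : RInt g T (t + T) = RInt g 0 t).
  { assert (E := RInt_comp_lin g 1 T 0 t).
    replace (1 * 0 + T) with T in E by ring; replace (1 * t + T) with (t + T) in E by ring.
    rewrite <- E by apply ex_RInt_cont.
    apply RInt_ext; intros x _.
    unfold scal; simpl; unfold mult; simpl; rewrite !Rmult_1_l; apply g_per. }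
  rewrite shift; apply Rplus_comm.
Qed.

Lemma RInt_opp_period (T : R) : periodic g T -> RInt g 0 (- T) = - RInt g 0 T.
Proof.
  intros g_per; assert (E := RInt_plus_period T (- T) g_per).
  rewrite Rplus_opp_l, RInt_point in E; simpl in E; unfold zero in E; simpl in E; lra.
Qed.

Lemma RInt_Rabs_period_eq0 (c : R) :
  b <> 0 -> periodic g (c / Rabs b) -> RInt g 0 (c / b) = 0 -> RInt g 0 (c / Rabs b) = 0.
Proof.
  intros hb g_per int0; destruct (Rcase_abs b) as [bneg | bpos].
  - rewrite Rabs_left in * by exact bneg.
    rewrite <- (Ropp_involutive (RInt g 0 (c / - b))), <- RInt_opp_period by exact g_per.
    replace (- (c / - b)) with (c / b) by (field; exact hb); rewrite int0; exact Ropp_0.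
  - rewrite Rabs_right by exact bpos; exact int0.
Qed.

Lemma phase_plus_period (T t : R) :
  periodic g T -> RInt g 0 T = 0 -> phase b g (t + T) = phase b g t + b * T.
Proof.
  intros g_per int0; unfold phase.
  rewrite RInt_plus_period, int0 by exact g_per; ring.
Qed.

Hypothesis b_neq0 : b <> 0.
Hypothesis g_per : periodic g (2 * PI / Rabs b).
Hypothesis g_int0 : RInt g 0 (2 * PI / b) = 0.

Lemma periodic_scal_sin_phase (r : R) :
  periodic (fun t => r * sin (phase b g t)) (2 * PI / Rabs b).
Proof.
  intros t; rewrite phase_plus_period, sin_plus_2PI_pm; trivial.
  - exact (Rmult_2PI_div_Rabs b b_neq0).
  - exact (RInt_Rabs_period_eq0 _ b_neq0 g_per g_int0).
Qed.

Lemma periodic_scal_cos_phase (r : R) :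
  periodic (fun t => r * cos (phase b g t)) (2 * PI / Rabs b).
Proof.
  intros t; rewrite phase_plus_period, cos_plus_2PI_pm; trivial.
  - exact (Rmult_2PI_div_Rabs b b_neq0).
  - exact (RInt_Rabs_period_eq0 _ b_neq0 g_per g_int0).
Qed.

End Phase.

Lemma continuous_g1 (b : R) (al1 al3 : R -> R) :
  (forall t, continuous al1 t) -> (forall t, continuous al3 t) ->
  forall t, continuous (g1 b al1 al3) t.
Proof.
  intros hc1 hc3 t; unfold g1.
  apply (continuous_plus (fun s => b * al1 s)); [apply (continuous_scal_r b al1) |]; auto.
Qed.

Lemma continuous_g2 (a b : R) (al1 al3 al4 : R -> R) :
  (forall t, continuous al1 t) -> (forall t, continuous al3 t) ->
  (forall t, continuous al4 t) -> forall t, continuous (g2 a b al1 al3 al4) t.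
Proof.
  intros hc1 hc3 hc4 t; unfold g2.
  apply (continuous_plus (g1 b al1 al3)); [apply continuous_g1 |]; auto.
  apply (continuous_scal_r (a ^ 4) al4); auto.
Qed.

Lemma F1x_on_plane a b al1 al2 al3 t x y :
  F1x a b al1 al2 al3 t x y (- a) = y * (b + g1 b al1 al3 t).
Proof. unfold F1x, g1; ring. Qed.

Lemma F1y_on_plane a b al1 al2 al3 t x y :
  F1y a b al1 al2 al3 t x y (- a) = - x * (b + g1 b al1 al3 t).
Proof. unfold F1y, g1; ring. Qed.

Lemma F1z_on_circle a e al1 al2 t x y :
  x ^ 2 + y ^ 2 = - (a * (a + e)) -> F1z e al1 al2 t x y (- a) = 0.
Proof.
  intros circle; unfold F1z.
  replace (e * - a - x ^ 2 - y ^ 2 - (- a) ^ 2) with 0 by lra; ring.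
Qed.

Lemma F2x_on_circle a b al1 al2 al3 al4 t x y :
  x ^ 2 + y ^ 2 = a ^ 2 -> F2x a b al1 al2 al3 al4 t x y (- a) = y * (b + g2 a b al1 al3 al4 t).
Proof.
  intros circle; unfold F2x, g2.
  replace (4 * a * - a + x ^ 2 + y ^ 2 + 2 * (- a) ^ 2) with (- a ^ 2) by lra.
  rewrite circle; ring.
Qed.

Lemma F2y_on_circle a b al1 al2 al3 al4 t x y :
  x ^ 2 + y ^ 2 = a ^ 2 -> F2y a b al1 al2 al3 al4 t x y (- a) = - x * (b + g2 a b al1 al3 al4 t).
Proof.
  intros circle; unfold F2y, g2.
  replace (4 * a * - a + x ^ 2 + y ^ 2 + 2 * (- a) ^ 2) with (- a ^ 2) by lra.
  rewrite circle; ring.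
Qed.

Lemma F2z_on_circle a al1 al2 t x y :
  x ^ 2 + y ^ 2 = a ^ 2 -> F2z a al1 al2 t x y (- a) = 0.
Proof.
  intros circle; unfold F2z.
  replace (2 * a * - a + x ^ 2 + y ^ 2 + (- a) ^ 2) with 0 by lra; ring.
Qed.

Theorem theorem5 (a b e : R) (al1 al2 al3 al4 : R -> R)
  (hb : b <> 0)
  (hc1 : forall t, continuous al1 t) (hc2 : forall t, continuous al2 t)
  (hc3 : forall t, continuous al3 t) (hc4 : forall t, continuous al4 t) :
  (* part (i) *)
  (periodic (g1 b al1 al3) (2 * PI / Rabs b) ->
   a * (a + e) < 0 ->
   RInt (g1 b al1 al3) 0 (2 * PI / b) = 0 ->
   (forall t,
      is_derive (sol1x a b e al1 al3) t
        (F1x a b al1 al2 al3 t (sol1x a b e al1 al3 t) (sol1y a b e al1 al3 t) (solz a t)) /\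
      is_derive (sol1y a b e al1 al3) t
        (F1y a b al1 al2 al3 t (sol1x a b e al1 al3 t) (sol1y a b e al1 al3 t) (solz a t)) /\
      is_derive (solz a) t
        (F1z e al1 al2 t (sol1x a b e al1 al3 t) (sol1y a b e al1 al3 t) (solz a t))) /\
   periodic (sol1x a b e al1 al3) (2 * PI / Rabs b) /\
   periodic (sol1y a b e al1 al3) (2 * PI / Rabs b) /\
   periodic (solz a) (2 * PI / Rabs b))
  /\
  (* part (ii) *)
  (periodic (g2 a b al1 al3 al4) (2 * PI / Rabs b) ->
   RInt (g2 a b al1 al3 al4) 0 (2 * PI / b) = 0 ->
   (forall t,
      is_derive (sol2x a b al1 al3 al4) t
        (F2x a b al1 al2 al3 al4 t (sol2x a b al1 al3 al4 t) (sol2y a b al1 al3 al4 t) (solz a t)) /\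
      is_derive (sol2y a b al1 al3 al4) t
        (F2y a b al1 al2 al3 al4 t (sol2x a b al1 al3 al4 t) (sol2y a b al1 al3 al4 t) (solz a t)) /\
      is_derive (solz a) t
        (F2z a al1 al2 t (sol2x a b al1 al3 al4 t) (sol2y a b al1 al3 al4 t) (solz a t))) /\
   periodic (sol2x a b al1 al3 al4) (2 * PI / Rabs b) /\
   periodic (sol2y a b al1 al3 al4) (2 * PI / Rabs b) /\
   periodic (solz a) (2 * PI / Rabs b)).
Proof.
  split.
  - intros g_per ae_neg g_int0.
    pose proof (continuous_g1 b al1 al3 hc1 hc3) as g_cont.
    assert (radius : sqrt (- (a * (a + e))) ^ 2 = - (a * (a + e))) by (apply pow2_sqrt; lra).
    split; [intros t; unfold sol1x, sol1y, solz; split; [| split] | split; [| split]].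
    + rewrite F1x_on_plane; apply is_derive_scal_sin_phase, g_cont.
    + rewrite F1y_on_plane; apply is_derive_scal_cos_phase, g_cont.
    + rewrite F1z_on_circle by (rewrite sum_sqr_polar; exact radius); now auto_derive.
    + apply periodic_scal_sin_phase; assumption.
    + apply periodic_scal_cos_phase; assumption.
    + now intros t.
  - intros g_per g_int0.
    pose proof (continuous_g2 a b al1 al3 al4 hc1 hc3 hc4) as g_cont.
    split; [intros t; unfold sol2x, sol2y, solz; split; [| split] | split; [| split]].
    + rewrite F2x_on_circle by apply sum_sqr_polar; apply is_derive_scal_sin_phase, g_cont.
    + rewrite F2y_on_circle by apply sum_sqr_polar; apply is_derive_scal_cos_phase, g_cont.
    + rewrite F2z_on_circle by apply sum_sqr_polar; now auto_derive.
    + apply periodic_scal_sin_phase; assumption.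
    + apply periodic_scal_cos_phase; assumption.
    + now intros t.
Qed.
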